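(* Suppose Assumption (A3) of the context holds, and let $\{\sigma_k\},\{z_k\}$ be generated by Algorithm RiAL-RGD, with $\mathcal{L}_k(x)=f(x)+M_{h/\sigma_k}(\mathcal{A}(x)+z_k/\sigma_k)$ and $\Phi^*:=\inf_{x\in\mathcal{M}}\Phi(x)$. Then for every $x\in\mathcal{M}$ and $k\ge1$: $$\mathcal{L}_k(x)\ge\Phi^*-\frac{2L_h^2}{\sigma_1},\qquad \mathcal{L}_k(x)\le\Phi(x)+\frac{L_h^2}{\sigma_k},\qquad \mathcal{L}_{k+1}(x)\le\mathcal{L}_k(x)+\frac{2L_h^2}{\sigma_k}.$$
   Context: Setting. $\mathcal{E}_1,\mathcal{E}_2$ are finite-dimensional Euclidean spaces with inner product $\langle\cdot,\cdot\rangle$ and norm $\|\cdot\|$. $\mathcal{M}\subseteq\mathcal{E}_1$ is an embedded Riemannian submanifold with induced metric; $\mathrm{grad}\,g(x)=\mathrm{proj}_{\mathrm{T}_x\mathcal{M}}(\nabla g(x))$. A retraction $\mathrm{R}_x:\mathrm{T}_x\mathcal{M}\to\mathcal{M}$ (smooth, globally defined, $\mathrm{R}_x(0)=x$, $\frac{d}{dt}\mathrm{R}_x(tv)|_{t=0}=v$) is fixed. $f:\mathcal{E}_1\to\mathbb{R}$ is $C^1$, $\mathcal{A}:\mathcal{E}_1\to\mathcal{E}_2$ smooth with Jacobian $\nabla\mathcal{A}$, $h:\mathcal{E}_2\to\mathbb{R}$ convex; $\Phi(x)=f(x)+h(\mathcal{A}(x))$. For $\lambda>0$, $\mathrm{prox}_{\lambda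 h}(w)=\arg\min_u\{h(u)+\frac1{2\lambda}\|u-w\|^2\}$, $M_{\lambda h}(w)=\min_u\{h(u)+\frac1{2\lambda}\|u-w\|^2\}$. Algorithm RiAL-RGD: input $x_1\in\mathcal{M}$, $y_1=z_1=0$, $\varepsilon_1,\sigma_1>0$, $b>1$. For $k=1,2,\dots$: with $\mathcal{L}_k$ as in the claim, run $x_{k,1}=x_k$, $x_{k,t+1}=\mathrm{R}_{x_{k,t}}(-\zeta_{k,t}\mathrm{grad}\,\mathcal{L}_k(x_{k,t}))$ (stepsizes $\zeta_{k,t}>0$) until $\|\mathrm{grad}\,\mathcal{L}_k(x_{k,t_k})\|\le\varepsilon_k$; set $x_{k+1}=x_{k,t_k}$, $y_{k+1}=\mathrm{prox}_{h/\sigma_k}(\mathcal{A}(x_{k+1})+z_k/\sigma_k)$, $z_{k+1}=z_k+\sigma_k(\mathcal{A}(x_{k+1})-y_{k+1})$, $\sigma_{k+1}=b\sigma_k$, $\varepsilon_{k+1}=\varepsilon_k/b$. Assumption (A3): (i) $f(x')\le f(x)+\langle\nabla f(x),x'-x\rangle+\frac{L_f}{2}\|x'-x\|^2$ for all $x,x'\in\mathcal{M}$, and $|h(w)-h(w')|\le L_h\|w-w'\|$ for all $w,w'\in\mathcal{E}_2$; (ii) $\mathcal{A}$ is $L^0_{\mathcal{A}}$-Lipschitz and $\nabla\mathcal{A}$ is $L^1_{\mathcal{A}}$-Lipschitz on $\mathrm{conv}\,\mathcal{M}$; (iii) $\rho_{\mathcal{A}}:=\max_{x\in\mathrm{conv}\,\mathcal{M}}\|\nabla\mathcal{A}(x)\|<+\infty$.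 *)

From HB Require Import structures.
From mathcomp Require Import all_boot all_order all_algebra.
From mathcomp Require Import all_classical all_reals ereal.
Set Implicit Arguments. Unset Strict Implicit. Unset Printing Implicit Defensive.
Import Order.TTheory GRing.Theory Num.Theory.
Local Open Scope ring_scope.
Local Open Scope classical_set_scope.

Section Defs.
Variable R : realType.

Definition dotv (n : nat) (u v : 'rV[R]_n) : R := (u *m v^T) 0 0.
Definition enorm (n : nat) (u : 'rV[R]_n) : R := Num.sqrt (dotv u u).

Definition convex_fun (n : nat) (h : 'rV[R]_n -> R) : Prop :=
  forall (u v : 'rV[R]_n) (t : R), 0 <= t -> t <= 1 ->
    h (t *: u + (1 - t) *: v) <= t * h u + (1 - t) * h v.

Definition lipschitz_fun (n : nat) (h : 'rV[R]_n -> R) (L : R) : Prop :=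
  forall w w' : 'rV[R]_n, `|h w - h w'| <= L * enorm (w - w').

Definition moreau (n : nat) (h : 'rV[R]_n -> R) (lam : R) (w : 'rV[R]_n) : R :=
  inf [set h u + (2 * lam)^-1 * (enorm (u - w)) ^+ 2 | u in [set: 'rV[R]_n]].

Definition is_prox (n : nat) (h : 'rV[R]_n -> R) (lam : R) (w y : 'rV[R]_n) : Prop :=
  forall u : 'rV[R]_n,
    h y + (2 * lam)^-1 * (enorm (y - w)) ^+ 2 <= h u + (2 * lam)^-1 * (enorm (u - w)) ^+ 2.

Definition auglag (n1 n2 : nat) (f : 'rV[R]_n1 -> R) (A : 'rV[R]_n1 -> 'rV[R]_n2)
  (h : 'rV[R]_n2 -> R) (sigma : R) (z : 'rV[R]_n2) (x : 'rV[R]_n1) : R :=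
  f x + moreau h sigma^-1 (A x + sigma^-1 *: z).

Definition Phi (n1 n2 : nat) (f : 'rV[R]_n1 -> R) (A : 'rV[R]_n1 -> 'rV[R]_n2)
  (h : 'rV[R]_n2 -> R) (x : 'rV[R]_n1) : R := f x + h (A x).

Definition Phistar (n1 n2 : nat) (M : set 'rV[R]_n1) (f : 'rV[R]_n1 -> R)
  (A : 'rV[R]_n1 -> 'rV[R]_n2) (h : 'rV[R]_n2 -> R) : \bar R :=
  ereal_inf [set (Phi f A h u)%:E | u in M].

End Defs.

From HB Require Import structures.
From mathcomp Require Import all_boot all_order all_algebra.
From mathcomp Require Import all_classical all_reals ereal.
From mathcomp Require Import ring lra.
Set Implicit Arguments. Unset Strict Implicit. Unset Printing Implicit Defensive.
Import Order.TTheory GRing.Theory Num.Theory.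
Local Open Scope ring_scope.
Local Open Scope classical_set_scope.

(* Everything rests on the multipliers staying bounded: the prox step moves at
   most [L_h / sigma_k], so [||z_k|| <= L_h] for all [k].  With [z] bounded by
   [L_h], the Moreau envelope at [A x + z / sigma] is within
   [3 L_h^2 / (2 sigma)] below and [L_h^2 / (2 sigma)] above [h (A x)], so
   [L_k] sandwiches [Phi] up to [O(L_h^2 / sigma_k)]; since [sigma_k] is
   nondecreasing, the three inequalities follow. *)

Section EuclideanNorm.
Variables (R : realType) (n : nat).
Implicit Types (u v : 'rV[R]_n) (c : R).

Lemma dotvZ c v : dotv (c *: v) (c *: v) = c ^+ 2 * dotv v v.
Proof. by rewrite /dotv !mxE mulr_sumr; apply: eq_bigr => i _; rewrite !mxE; ring. Qed.

Lemma enorm_ge0 v : 0 <= enorm v.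
Proof. exact: sqrtr_ge0. Qed.

Lemma enormZ c v : enorm (c *: v) = `|c| * enorm v.
Proof. by rewrite /enorm dotvZ sqrtrM ?sqr_ge0 // sqrtr_sqr. Qed.

Lemma enorm0 : enorm (0 : 'rV[R]_n) = 0.
Proof. by rewrite -(scale0r (0 : 'rV[R]_n)) enormZ normr0 mul0r. Qed.

Lemma enorm_distC u v : enorm (u - v) = enorm (v - u).
Proof. by rewrite -opprB -scaleN1r enormZ normrN1 mul1r. Qed.

Lemma enorm_shift c u v : enorm (u - (u + c *: v)) = `|c| * enorm v.
Proof. by rewrite opprD addNKr -scaleNr enormZ normrN. Qed.

End EuclideanNorm.

Lemma lipschitz_fun_normr (R : realType) n (h : 'rV[R]_n -> R) L :
  lipschitz_fun h L -> lipschitz_fun h `|L|.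
Proof.
move=> hL w w'; apply: le_trans (hL w w') _.
by apply: ler_wpM2r; [exact: enorm_ge0 | exact: ler_norm].
Qed.

Lemma invf_mul2V (R : realType) (s : R) : (2 * s^-1)^-1 = s / 2.
Proof. by rewrite invfM invrK mulrC. Qed.

Section MoreauEnvelope.
Variables (R : realType) (n : nat) (h : 'rV[R]_n -> R) (L : R).
Hypotheses (L_ge0 : 0 <= L) (hL : lipschitz_fun h L).
Implicit Types (u v w y z : 'rV[R]_n) (s t : R).

Lemma lipschitz_fun_le u v : h u <= h v + L * enorm (u - v).
Proof. have := hL u v; have := ler_norm (h u - h v); lra. Qed.

(* Test the prox inequality against [y + t (w - y)]. *)
Lemma prox_perturb s w y t : 0 < s -> is_prox h s^-1 w y -> 0 < t <= 1 ->
  s * (2 - t) * enorm (y - w) <= 2 * L.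
Proof.
move=> s_gt0 hprox /andP[t_gt0 t_le1].
set d := enorm (y - w).
have [d0|d_neq0] := eqVneq d 0; first by rewrite d0 mulr0 mulr_ge0.
have d_gt0 : 0 < d by rewrite lt_def d_neq0 enorm_ge0.
set u := y + t *: (w - y).
have uw : u - w = (1 - t) *: (y - w) by apply/rowP => i; rewrite !mxE; ring.
have uy : u - y = t *: (w - y) by apply/rowP => i; rewrite !mxE; ring.
have := hprox u; rewrite invf_mul2V uw enormZ ger0_norm ?subr_ge0 // -/d.
have := lipschitz_fun_le u y; rewrite uy enormZ gtr0_norm // -enorm_distC -/d.
move=> lip opt.
have decrease : (s * (2 - t) * d) * (t * d) <= (2 * L) * (t * d).
  by move: lip opt; rewrite exprMn; nra.
by rewrite ler_pM2r // in decrease; exact: mulr_gt0.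
Qed.

Lemma prox_dist_le s w y : 0 < s -> is_prox h s^-1 w y -> s * enorm (y - w) <= L.
Proof.
move=> s_gt0 hprox; set d := enorm (y - w).
rewrite leNgt; apply/negP => sd_gtL.
have sd_gt0 : 0 < s * d by apply: le_lt_trans sd_gtL.
(* this [t] makes the perturbation bound read [s d + L <= 2 L] *)
set t := (s * d - L) / (s * d).
have t_in : 0 < t <= 1.
  by rewrite divr_gt0 ?subr_gt0 //= ler_pdivrMr // mul1r gerBl.
have := prox_perturb s_gt0 hprox t_in.
have : t * (s * d) = s * d - L by rewrite /t divfK // gt_eqF.
rewrite -/d; nra.
Qed.

Lemma multiplier_norm_le s v y z : 0 < s ->
  is_prox h s^-1 (v + s^-1 *: z) y -> enorm (z + s *: (v - y)) <= L.
Proof.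
move=> s_gt0 hprox.
have -> : z + s *: (v - y) = s *: ((v + s^-1 *: z) - y).
  by apply/rowP => i; rewrite !mxE; field; rewrite gt_eqF.
by rewrite enormZ gtr0_norm // enorm_distC; exact: prox_dist_le.
Qed.

Lemma moreau_set_lbound s w : 0 < s ->
  lbound [set h u + (2 * s^-1)^-1 * enorm (u - w) ^+ 2 | u in [set: 'rV[R]_n]]
    (h w - L ^+ 2 / s / 2).
Proof.
move=> s_gt0 _ [u _ <-]; rewrite invf_mul2V.
have := lipschitz_fun_le w u; rewrite enorm_distC.
set r := enorm (u - w).
have square : 0 <= (s * r - L) ^+ 2 / s / 2 by rewrite !divr_ge0 ?sqr_ge0 ?ltW.
have expand : (s * r - L) ^+ 2 / s / 2 = s / 2 * r ^+ 2 - L * r + L ^+ 2 / s / 2.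
  by field; rewrite gt_eqF.
rewrite expand in square; lra.
Qed.

Lemma moreau_ge s w : 0 < s -> h w - L ^+ 2 / s / 2 <= moreau h s^-1 w.
Proof.
move=> s_gt0; apply: lb_le_inf; last exact: moreau_set_lbound.
by exists (h w + (2 * s^-1)^-1 * enorm (w - w) ^+ 2), w.
Qed.

Lemma moreau_le s w v : 0 < s -> moreau h s^-1 w <= h v + s / 2 * enorm (v - w) ^+ 2.
Proof.
move=> s_gt0; rewrite -invf_mul2V; apply: ge_inf; last by exists v.
by exists (h w - L ^+ 2 / s / 2); exact: moreau_set_lbound.
Qed.

End MoreauEnvelope.

Section AugmentedLagrangian.
Variables (R : realType) (n1 n2 : nat) (f : 'rV[R]_n1 -> R)
  (A : 'rV[R]_n1 -> 'rV[R]_n2) (h : 'rV[R]_n2 -> R) (L : R).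
Hypotheses (L_ge0 : 0 <= L) (hL : lipschitz_fun h L).
Implicit Types (x : 'rV[R]_n1) (z : 'rV[R]_n2) (s : R).

Lemma auglag_ge s z x : 0 < s -> enorm z <= L ->
  Phi f A h x - 3 / 2 * (L ^+ 2 / s) <= auglag f A h s z x.
Proof.
move=> s_gt0 z_le; rewrite /Phi /auglag.
have := moreau_ge hL (A x + s^-1 *: z) s_gt0.
have := lipschitz_fun_le hL (A x) (A x + s^-1 *: z); rewrite enorm_shift gtr0_norm ?invr_gt0 //.
have : L * (s^-1 * enorm z) <= L ^+ 2 / s.
  by rewrite expr2 -mulrA ler_wpM2l // mulrC ler_wpM2r // invr_ge0 ltW.
lra.
Qed.

Lemma auglag_le s z x : 0 < s -> enorm z <= L ->
  auglag f A h s z x <= Phi f A h x + L ^+ 2 / s / 2.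
Proof.
move=> s_gt0 z_le; rewrite /Phi /auglag.
have := moreau_le hL (A x + s^-1 *: z) (A x) s_gt0; rewrite enorm_shift gtr0_norm ?invr_gt0 //.
have -> : s / 2 * (s^-1 * enorm z) ^+ 2 = enorm z ^+ 2 / s / 2.
  by field; rewrite gt_eqF.
have : enorm z ^+ 2 / s / 2 <= L ^+ 2 / s / 2.
  by rewrite !ler_pM2r ?invr_gt0 // ler_sqr ?nnegrE ?enorm_ge0.
lra.
Qed.

Lemma multipliers_bounded (sigma : nat -> R) (x : nat -> 'rV[R]_n1)
    (y z : nat -> 'rV[R]_n2) :
  (forall k, (1 <= k)%N -> 0 < sigma k) -> z 1%N = 0 ->
  (forall k, (1 <= k)%N ->
     is_prox h (sigma k)^-1 (A (x k.+1) + (sigma k)^-1 *: z k) (y k.+1)) ->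
  (forall k, (1 <= k)%N -> z k.+1 = z k + sigma k *: (A (x k.+1) - y k.+1)) ->
  forall k, (1 <= k)%N -> enorm (z k) <= L.
Proof.
move=> sigma_gt0 z1 hprox hz [//|[_|k _]]; first by rewrite z1 enorm0.
rewrite hz //; exact: (multiplier_norm_le L_ge0 hL (sigma_gt0 k.+1 isT) (hprox k.+1 isT)).
Qed.

Lemma auglag_bounds s1 s s' z z' x : 0 < s1 -> s1 <= s -> s <= s' ->
    enorm z <= L -> enorm z' <= L ->
  [/\ Phi f A h x - 2 * L ^+ 2 / s1 <= auglag f A h s z x,
      auglag f A h s z x <= Phi f A h x + L ^+ 2 / s
    & auglag f A h s' z' x <= auglag f A h s z x + 2 * L ^+ 2 / s].
Proof.
move=> s1_gt0 s1_le s_le z_le z'_le.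
have s_gt0 := lt_le_trans s1_gt0 s1_le; have s'_gt0 := lt_le_trans s_gt0 s_le.
have lo := auglag_ge x s_gt0 z_le.
have up := auglag_le x s_gt0 z_le.
have up' := auglag_le x s'_gt0 z'_le.
have L2s_ge0 : 0 <= L ^+ 2 / s by rewrite divr_ge0 ?sqr_ge0 ?ltW.
have L2s_first : L ^+ 2 / s <= L ^+ 2 / s1 by rewrite ler_wpM2l ?sqr_ge0 ?lef_pV2.
have L2s_succ : L ^+ 2 / s' <= L ^+ 2 / s by rewrite ler_wpM2l ?sqr_ge0 ?lef_pV2.
rewrite -[2 * _ / s1]mulrA -[2 * _ / s]mulrA.
move: lo up up' L2s_ge0 L2s_first L2s_succ.
move: (auglag f A h s z x) (auglag f A h s' z' x) (Phi f A h x) => a a' p.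
move: (L ^+ 2 / s1) (L ^+ 2 / s) (L ^+ 2 / s') => t1 t t'.
by split; lra.
Qed.

End AugmentedLagrangian.

Section GeometricSequence.
Variables (R : numDomainType) (b : R) (s : nat -> R).
Hypotheses (b_ge1 : 1 <= b) (s1_gt0 : 0 < s 1%N)
  (s_succ : forall k, (1 <= k)%N -> s k.+1 = b * s k).

Lemma geometric_ge_first k : (1 <= k)%N -> s 1%N <= s k.
Proof.
elim: k => [//|[_ _|k IH _]]; first exact: lexx.
rewrite [s k.+2]s_succ //; apply: le_trans (IH isT) _.
by rewrite ler_peMl // ltW // (lt_le_trans s1_gt0 (IH isT)).
Qed.

Lemma geometric_le_succ k : (1 <= k)%N -> s k <= s k.+1.
Proof.
move=> k_ge1; rewrite [s k.+1]s_succ // ler_peMl //.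
exact: ltW (lt_le_trans s1_gt0 (geometric_ge_first k_ge1)).
Qed.

End GeometricSequence.

Theorem lemma3 (R : realType) (n1 n2 : nat) (M : set 'rV[R]_n1)
  (f : 'rV[R]_n1 -> R) (A : 'rV[R]_n1 -> 'rV[R]_n2) (h : 'rV[R]_n2 -> R)
  (Lh b : R) (x : nat -> 'rV[R]_n1) (y z : nat -> 'rV[R]_n2)
  (sigma eps : nat -> R) :
  convex_fun h ->
  lipschitz_fun h Lh ->
  0 < sigma 1%N -> 0 < eps 1%N -> 1 < b ->
  x 1%N \in M -> y 1%N = 0 -> z 1%N = 0 ->
  (forall k : nat, (1 <= k)%N -> x k.+1 \in M) ->
  (forall k : nat, (1 <= k)%N ->
     is_prox h (sigma k)^-1 (A (x k.+1) + (sigma k)^-1 *: z k) (y k.+1)) ->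
  (forall k : nat, (1 <= k)%N -> z k.+1 = z k + sigma k *: (A (x k.+1) - y k.+1)) ->
  (forall k : nat, (1 <= k)%N -> sigma k.+1 = b * sigma k) ->
  (forall k : nat, (1 <= k)%N -> eps k.+1 = eps k / b) ->
  forall (u : 'rV[R]_n1), u \in M -> forall k : nat, (1 <= k)%N ->
    [/\ (Phistar M f A h - (2 * Lh ^+ 2 / sigma 1%N)%:E
           <= (auglag f A h (sigma k) (z k) u)%:E)%E,
        auglag f A h (sigma k) (z k) u <= Phi f A h u + Lh ^+ 2 / sigma k
      & auglag f A h (sigma k.+1) (z k.+1) u
          <= auglag f A h (sigma k) (z k) u + 2 * Lh ^+ 2 / sigma k].
Proof.
(* Neither the convexity of [h] nor the tolerances [eps] play a role. *)
move=> _ /lipschitz_fun_normr hL sigma1_gt0 _ /ltW b_ge1 _ _ z1 _ hprox hz hsigma _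
  u uM k k_ge1.
have sigma_ge_first := geometric_ge_first b_ge1 sigma1_gt0 hsigma.
have sigma_gt0 j : (1 <= j)%N -> 0 < sigma j.
  by move=> /sigma_ge_first; exact: lt_le_trans.
have L_ge0 := normr_ge0 Lh.
have z_le := multipliers_bounded (A := A) L_ge0 hL sigma_gt0 z1 hprox hz.
have [lo up step] := auglag_bounds f A L_ge0 hL u sigma1_gt0 (sigma_ge_first k k_ge1)
  (geometric_le_succ b_ge1 sigma1_gt0 hsigma k_ge1) (z_le k k_ge1) (z_le k.+1 isT).
rewrite -[Lh ^+ 2]real_normK ?num_real //; split=> //.
have Phistar_le : (Phistar M f A h <= (Phi f A h u)%:E)%E.
  by apply: ereal_inf_lbound; exists u => //; rewrite -inE.
by apply: le_trans (leeB Phistar_le (lexx _)) _; rewrite -EFinB lee_fin.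
Qed.
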